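(* Under the standing assumptions, the following hold. (9) $\{M^{(1,2)}\}\subseteq\{C^{-1}B^{(1)}A^{-1}\}$; and $\{M^{(1,2)}\}\supseteq\{C^{-1}B^{(1)}A^{-1}\}\Leftrightarrow\{M^{(1,2)}\}=\{C^{-1}B^{(1)}A^{-1}\}\Leftrightarrow r(B)=m$ or $r(B)=n$. (10) $\{M^{(1,2)}\}=\{C^{-1}B^{(1,2)}A^{-1}\}$. (11) $\{M^{(1,2)}\}\cap\{C^{-1}B^{(1,3)}A^{-1}\}\neq\emptyset$; $\{M^{(1,2)}\}\supseteq\{C^{-1}B^{(1,3)}A^{-1}\}\Leftrightarrow r(B)=m$ or $r(B)=n$; $\{M^{(1,2)}\}\subseteq\{C^{-1}B^{(1,3)}A^{-1}\}\Leftrightarrow B=0$ or $r(B)=m$; $\{M^{(1,2)}\}=\{C^{-1}B^{(1,3)}A^{-1}\}\Leftrightarrow r(B)=m$. (12) $\{M^{(1,2)}\}\cap\{C^{-1}B^{(1,4)}A^{-1}\}\neq\emptyset$; $\{M^{(1,2)}\}\supseteq\{C^{-1}B^{(1,4)}A^{-1}\}\Leftrightarrow r(B)=m$ or $r(B)=n$; $\{M^{(1,2)}\}\subseteq\{C^{-1}B^{(1,4)}A^{-1}\}\Leftrightarrow B=0$ or $r(B)=n$; $\{M^{(1,2)}\}=\{C^{-1}B^{(1,4)}A^{-1}\}\Leftrightarrow r(B)=n$. (13) $\{M^{(1,2)}\}\supseteq\{C^{-1}B^{(1,2,3)}A^{-1}\}$; and $\{M^{(1,2)}\}\subseteq\{C^{-1}B^{(1,2,3)}A^{-1}\}\Leftrightarrow\{M^{(1,2)}\}=\{C^{-1}B^{(1,2,3)}A^{-1}\}\Leftrightarrow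 B=0$ or $r(B)=m$. (14) $\{M^{(1,2)}\}\supseteq\{C^{-1}B^{(1,2,4)}A^{-1}\}$; and $\{M^{(1,2)}\}\subseteq\{C^{-1}B^{(1,2,4)}A^{-1}\}\Leftrightarrow\{M^{(1,2)}\}=\{C^{-1}B^{(1,2,4)}A^{-1}\}\Leftrightarrow B=0$ or $r(B)=n$. (15) $\{M^{(1,2)}\}\cap\{C^{-1}B^{(1,3,4)}A^{-1}\}\neq\emptyset$; $\{M^{(1,2)}\}\supseteq\{C^{-1}B^{(1,3,4)}A^{-1}\}\Leftrightarrow r(B)=m$ or $r(B)=n$; $\{M^{(1,2)}\}\subseteq\{C^{-1}B^{(1,3,4)}A^{-1}\}\Leftrightarrow B=0$ or $r(B)=m=n$; $\{M^{(1,2)}\}=\{C^{-1}B^{(1,3,4)}A^{-1}\}\Leftrightarrow r(B)=m=n$. (16) $C^{-1}B^\dagger A^{-1}\in\{M^{(1,2)}\}$.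
   Context: Standing assumptions: $m,n\ge1$; $A\in\mathbb{C}^{m\times m}$ and $C\in\mathbb{C}^{n\times n}$ are nonsingular; $B\in\mathbb{C}^{m\times n}$; $M=ABC$. For a complex matrix $X$, $X^*$ is its conjugate transpose, $r(X)$ its rank and $\mathscr{R}(X)$ its column space. For $X\in\mathbb{C}^{p\times q}$, a matrix $G\in\mathbb{C}^{q\times p}$ is called an $\{i,\ldots,j\}$-generalized inverse of $X$ (written $X^{(i,\ldots,j)}$) if it satisfies the equations numbered $i,\ldots,j$ among the four Penrose equations (i) $XGX=X$, (ii) $GXG=G$, (iii) $(XG)^*=XG$, (iv) $(GX)^*=GX$; $\{X^{(i,\ldots,j)}\}$ denotes the set of all such $G$. The Moore–Penrose inverse $X^\dagger$ is the unique matrix satisfying all four equations. For a type $(k,\ldots,l)$, $\{C^{-1}B^{(k,\ldots,l)}A^{-1}\}:=\{C^{-1}GA^{-1}: G\in\{B^{(k,\ldots,l)}\}\}$. *)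

(* Complex matrices are modelled over an arbitrary
   numClosedFieldType R (algebraically closed field with conjugation and
   norm, e.g. algC). *)
From HB Require Import structures.
From mathcomp Require Import all_boot all_order all_algebra.
Set Implicit Arguments. Unset Strict Implicit. Unset Printing Implicit Defensive.
Import Order.TTheory GRing.Theory Num.Theory.
Local Open Scope ring_scope.

Definition ctmx (R : numClosedFieldType) (p q : nat) (X : 'M[R]_(p, q)) : 'M[R]_(q, p) :=
  (map_mx (fun z => z^*) X)^T.

Definition penrose (R : numClosedFieldType) (p q : nat) (i : nat)
  (X : 'M[R]_(p, q)) (G : 'M[R]_(q, p)) : Prop :=
  match i with
  | 1%N => X *m G *m X = X
  | 2%N => G *m X *m G = G
  | 3%N => ctmx (X *m G) = X *m G
  | 4%N => ctmx (G *m X) = G *m X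
  | _ => True
  end.

Definition ginv (R : numClosedFieldType) (p q : nat) (t : seq nat)
  (X : 'M[R]_(p, q)) (G : 'M[R]_(q, p)) : Prop :=
  forall i, i \in t -> penrose i X G.

Definition is_MP (R : numClosedFieldType) (p q : nat)
  (X : 'M[R]_(p, q)) (G : 'M[R]_(q, p)) : Prop :=
  ginv [:: 1; 2; 3; 4]%N X G.

Definition rev_set (R : numClosedFieldType) (m n : nat) (t : seq nat)
  (A : 'M[R]_m) (B : 'M[R]_(m, n)) (C : 'M[R]_n) (G : 'M[R]_(n, m)) : Prop :=
  exists G0, ginv t B G0 /\ G = invmx C *m G0 *m invmx A.

Definition msub (T : Type) (S1 S2 : T -> Prop) : Prop := forall x, S1 x -> S2 x.
Definition meq (T : Type) (S1 S2 : T -> Prop) : Prop := forall x, S1 x <-> S2 x.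
Definition mmeet (T : Type) (S1 S2 : T -> Prop) : Prop := exists x, S1 x /\ S2 x.

(* Since A and C are units, G |-> C G A maps {M^(1,2)} bijectively onto
   {B^(1,2)} and {C^-1 B^(t) A^-1} onto {B^(t)}, so every claim is a comparison
   between classes of generalized inverses of B itself.
   If r(B) = m then B H = I for every {1}-inverse H, which forces equations (2)
   and (3); dually r(B) = n gives H B = I, forcing (2) and (4).  Conversely,
   starting from the Moore-Penrose inverse Bd (obtained from a full-rank
   factorization of B), adding (I - Bd B) W (I - B Bd) preserves (1), (3), (4)
   but destroys (2) for a suitable W when r(B) < m and r(B) < n, and adding Bd B W (I - B Bd) preserves (1), (2) but
   destroys (3) when B <> 0 and r(B) < m; the case of (4) follows by conjugate
   transposition, which swaps equations (3) and (4).  The Moore-Penrose inverse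
   lies in every class, giving the nonempty intersections. *)

From HB Require Import structures.
From mathcomp Require Import all_boot all_order all_algebra.
From Stdlib Require Import FunctionalExtensionality PropExtensionality.
Set Implicit Arguments. Unset Strict Implicit. Unset Printing Implicit Defensive.
Import Order.TTheory GRing.Theory Num.Theory.
Local Open Scope ring_scope.

Lemma exists_mulmx_neq0 (R : idomainType) p q s t (P : 'M[R]_(p, q)) (Q : 'M[R]_(s, t)) :
  P != 0 -> Q != 0 -> exists W : 'M[R]_(q, s), P *m W *m Q != 0.
Proof.
move=> /matrix0Pn [i [j Pij]] /matrix0Pn [k [l Qkl]].
exists (delta_mx j (0 : 'I_1) *m delta_mx 0 k); apply/matrix0Pn; exists i, l.
rewrite mulmxA -colE -mulmxA -rowE !mxE big_ord1 !mxE.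
by rewrite mulf_neq0.
Qed.

Section ConjugateTranspose.
Variable R : numClosedFieldType.

Lemma ctmxK p q : cancel (@ctmx R p q) (@ctmx R q p).
Proof. by move=> X; apply/matrixP=> i j; rewrite !mxE conjCK. Qed.

Lemma ctmx_inj p q : injective (@ctmx R p q).
Proof. exact: can_inj (@ctmxK p q). Qed.

Lemma ctmxM p q s (X : 'M[R]_(p, q)) (Y : 'M[R]_(q, s)) :
  ctmx (X *m Y) = ctmx Y *m ctmx X.
Proof. by rewrite /ctmx map_mxM trmx_mul. Qed.

Lemma ctmxD p q (X Y : 'M[R]_(p, q)) : ctmx (X + Y) = ctmx X + ctmx Y.
Proof. by rewrite /ctmx map_mxD linearD. Qed.

Lemma ctmx0 p q : ctmx (0 : 'M[R]_(p, q)) = 0.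
Proof. by rewrite /ctmx map_mx0 trmx0. Qed.

Lemma ctmx1 p : ctmx (1%:M : 'M[R]_p) = 1%:M.
Proof. by rewrite /ctmx map_mx1 trmx1. Qed.

Lemma ctmxV p (X : 'M[R]_p) : ctmx (invmx X) = invmx (ctmx X).
Proof. by rewrite /ctmx map_invmx trmx_inv. Qed.

Lemma mxrank_ctmx p q (X : 'M[R]_(p, q)) : \rank (ctmx X) = \rank X.
Proof. by rewrite /ctmx mxrank_tr mxrank_map. Qed.

(* The diagonal entries of [X^* X] are the squared norms of the columns of [X]. *)
Lemma ctmx_mul_self_eq0 p q (X : 'M[R]_(p, q)) : ctmx X *m X = 0 -> X = 0.
Proof.
move=> XX0; apply/matrixP=> i j; rewrite mxE.
have /eqP := congr1 (fun Y : 'M[R]_q => Y j j) XX0.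
rewrite !mxE (eq_bigr (fun k => `|X k j| ^+ 2)) => [|k _]; last first.
  by rewrite !mxE normCK mulrC.
rewrite psumr_eq0 => [/allP/(_ i (mem_index_enum i))|k _]; last exact: exprn_ge0.
by rewrite /= sqrf_eq0 normr_eq0 => /eqP.
Qed.

Lemma unitmx_ctmx_mul p q (F : 'M[R]_(p, q)) : row_full F -> ctmx F *m F \in unitmx.
Proof.
move=> /row_fullP [L LF1]; rewrite -row_free_unit; apply: inj_row_free => v vFF0.
have vF0 : F *m ctmx v = 0.
  by apply: ctmx_mul_self_eq0; rewrite ctmxM ctmxK mulmxA -(mulmxA v) vFF0 mul0mx.
by apply: ctmx_inj; rewrite ctmx0 -[ctmx v]mul1mx -LF1 -mulmxA vF0 mulmx0.
Qed.

Lemma unitmx_mul_ctmx p q (K : 'M[R]_(p, q)) : row_free K -> K *m ctmx K \in unitmx.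
Proof.
by move=> freeK; rewrite -{1}[K]ctmxK unitmx_ctmx_mul // /row_full mxrank_ctmx.
Qed.

End ConjugateTranspose.

Section MoorePenrose.
Variable R : numClosedFieldType.

Lemma ginv_subset p q s t (X : 'M[R]_(p, q)) G :
  all [in s] t -> ginv s X G -> ginv t X G.
Proof. by move=> /allP st XG i /st; apply: XG. Qed.

Lemma is_MP_full_rank_factor p q r (F : 'M[R]_(p, r)) (K : 'M[R]_(r, q)) :
  row_full F -> row_free K ->
  is_MP (F *m K) (ctmx K *m invmx (K *m ctmx K) *m invmx (ctmx F *m F) *m ctmx F).
Proof.
move=> fullF freeK.
set GK := invmx (K *m ctmx K); set GF := invmx (ctmx F *m F).
have GK_K : K *m ctmx K *m GK = 1%:M by apply/mulmxV/unitmx_mul_ctmx.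
have GF_F : GF *m (ctmx F *m F) = 1%:M by apply/mulVmx/unitmx_ctmx_mul.
have hermGK : ctmx GK = GK by rewrite ctmxV ctmxM ctmxK.
have hermGF : ctmx GF = GF by rewrite ctmxV ctmxM ctmxK.
set G := _ *m ctmx F.
have XG : F *m K *m G = F *m GF *m ctmx F.
  by rewrite !mulmxA -(mulmxA F K) -(mulmxA F) GK_K mulmx1.
have GX : G *m (F *m K) = ctmx K *m GK *m K.
  by rewrite !mulmxA -(mulmxA _ (ctmx F)) -(mulmxA _ GF) GF_F mulmx1.
case=> [|[|[|[|[|i]]]]] //= _.
- by rewrite XG !mulmxA -(mulmxA _ (ctmx F)) -(mulmxA _ GF) GF_F mulmx1.
- by rewrite GX !mulmxA -(mulmxA _ K) -(mulmxA _ (K *m ctmx K)) GK_K mulmx1.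
- by rewrite XG !ctmxM ctmxK hermGF mulmxA.
- by rewrite GX !ctmxM ctmxK hermGK mulmxA.
Qed.

Lemma is_MP_exists p q (X : 'M[R]_(p, q)) : exists G, is_MP X G.
Proof.
eexists; rewrite -[X in is_MP X]mulmx_base.
exact: is_MP_full_rank_factor (col_base_full X) (row_base_free X).
Qed.

End MoorePenrose.

Section Duality.
Variable R : numClosedFieldType.

Lemma ginv12E p q (X : 'M[R]_(p, q)) (G : 'M[R]_(q, p)) :
  ginv [:: 1; 2]%N X G <-> penrose 1 X G /\ penrose 2 X G.
Proof.
split=> [XG | [XG1 XG2] i]; first by split; apply: XG.
by rewrite !inE => /orP [] /eqP ->.
Qed.

Lemma ginv12_ctmx p q (X : 'M[R]_(p, q)) (G : 'M[R]_(q, p)) :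
  ginv [:: 1; 2]%N (ctmx X) (ctmx G) <-> ginv [:: 1; 2]%N X G.
Proof.
rewrite !ginv12E /= -!ctmxM !mulmxA.
by split=> [[/ctmx_inj -> /ctmx_inj ->] | [-> ->]].
Qed.

Lemma penrose3_ctmx p q (X : 'M[R]_(p, q)) (G : 'M[R]_(q, p)) :
  penrose 3 (ctmx X) (ctmx G) <-> penrose 4 X G.
Proof. by rewrite /= -ctmxM ctmxK; split=> /esym. Qed.

End Duality.

Section Counterexamples.
Variables (R : numClosedFieldType) (m n : nat).
Variables (B : 'M[R]_(m, n)) (Bd : 'M[R]_(n, m)).
Hypothesis MP_Bd : is_MP B Bd.

Let B1 : B *m Bd *m B = B := @MP_Bd 1%N isT.
Let B2 : Bd *m B *m Bd = Bd := @MP_Bd 2%N isT.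
Let B3 : ctmx (B *m Bd) = B *m Bd := @MP_Bd 3%N isT.
Let B4 : ctmx (Bd *m B) = Bd *m B := @MP_Bd 4%N isT.

Let right_proj_neq0 : (\rank B < n)%N -> 1%:M - Bd *m B != 0.
Proof.
move=> ltn; rewrite subr_eq0; apply: contraTneq ltn => E.
by have := mxrankM_maxr Bd B; rewrite -E mxrank1 leqNgt.
Qed.

Let left_proj_neq0 : (\rank B < m)%N -> 1%:M - B *m Bd != 0.
Proof.
move=> ltm; rewrite subr_eq0; apply: contraTneq ltm => E.
by have := mxrankM_maxl B Bd; rewrite -E mxrank1 leqNgt.
Qed.

Let B_right_proj : B *m (1%:M - Bd *m B) = 0.
Proof. by rewrite mulmxBr mulmx1 mulmxA B1 subrr. Qed.

Let left_proj_B : (1%:M - B *m Bd) *m B = 0.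
Proof. by rewrite mulmxBl mul1mx B1 subrr. Qed.

Lemma ginv134_not_penrose2 : (\rank B < m)%N -> (\rank B < n)%N ->
  exists H, ginv [:: 1; 3; 4]%N B H /\ ~ penrose 2 B H.
Proof.
move=> ltm ltn.
have [W] := exists_mulmx_neq0 (right_proj_neq0 ltn) (left_proj_neq0 ltm).
set D := (1%:M - Bd *m B) *m W *m (1%:M - B *m Bd) => D_neq0.
have BD : B *m D = 0 by rewrite /D !mulmxA B_right_proj !mul0mx.
have DB : D *m B = 0 by rewrite /D -mulmxA left_proj_B mulmx0.
have BH : B *m (Bd + D) = B *m Bd by rewrite mulmxDr BD addr0.
have HB : (Bd + D) *m B = Bd *m B by rewrite mulmxDl DB addr0.
exists (Bd + D); split.
  move=> i; rewrite !inE => /or3P [] /eqP -> /=; rewrite ?BH ?HB.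
  - exact: B1.
  - exact: B3.
  - exact: B4.
rewrite /= HB mulmxDr B2 -(mulmxA Bd) BD mulmx0 => /addrI/esym D0.
by rewrite D0 eqxx in D_neq0.
Qed.

Lemma ginv12_not_penrose3 : B != 0 -> (\rank B < m)%N ->
  exists H, ginv [:: 1; 2]%N B H /\ ~ penrose 3 B H.
Proof.
move=> B_neq0 ltm.
have [W] := exists_mulmx_neq0 B_neq0 (left_proj_neq0 ltm).
set D := B *m W *m (1%:M - B *m Bd) => D_neq0.
have BBdD : B *m Bd *m D = D by rewrite /D !mulmxA B1.
have DB : D *m B = 0 by rewrite /D -mulmxA left_proj_B mulmx0.
have BH : B *m (Bd + Bd *m D) = B *m Bd + D by rewrite mulmxDr mulmxA BBdD.
exists (Bd + Bd *m D); split.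
  apply/ginv12E; split; first by rewrite /= BH mulmxDl B1 DB addr0.
  by rewrite /= mulmxDl -(mulmxA Bd) DB mulmx0 addr0 mulmxDr B2 mulmxA B2.
rewrite /= BH ctmxD B3 => /addrI hermD.
have D0 : D = 0 by rewrite -hermD -BBdD ctmxM B3 hermD mulmxA DB mul0mx.
by rewrite D0 eqxx in D_neq0.
Qed.

End Counterexamples.

Section Characterizations.
Variables (R : numClosedFieldType) (m n : nat) (B : 'M[R]_(m, n)).

Lemma ginv1_mulmx_full_rows H : \rank B = m -> penrose 1 B H -> B *m H = 1%:M.
Proof.
move=> rBm /= BHB; have /row_freeP [L BL] : row_free B by rewrite /row_free rBm.
by rewrite -[B *m H]mulmx1 -BL mulmxA BHB.
Qed.

Lemma ginv1_mulmx_full_cols H : \rank B = n -> penrose 1 B H -> H *m B = 1%:M.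
Proof.
move=> rBn /= BHB; have /row_fullP [L LB] : row_full B by rewrite /row_full rBn.
by rewrite -[H *m B]mul1mx -LB -mulmxA (mulmxA B) BHB.
Qed.

Lemma penrose2_full_rank H :
  \rank B = m \/ \rank B = n -> penrose 1 B H -> penrose 2 B H.
Proof.
case=> [rBm | rBn] BH1 /=.
  by rewrite -mulmxA ginv1_mulmx_full_rows ?mulmx1.
by rewrite ginv1_mulmx_full_cols ?mul1mx.
Qed.

Lemma penrose3_full_rows H :
  B = 0 \/ \rank B = m -> penrose 1 B H -> penrose 3 B H.
Proof.
case=> [-> | rBm BH1] /=; first by rewrite mul0mx ctmx0.
by rewrite ginv1_mulmx_full_rows ?ctmx1.
Qed.

Lemma ginv134_penrose2P :
  (forall H, ginv [:: 1; 3; 4]%N B H -> penrose 2 B H) <-> \rank B = m \/ \rank B = n.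
Proof.
split=> [sub2 | full H BH134]; last exact: penrose2_full_rank (@BH134 1%N isT).
have [Bd MP_Bd] := is_MP_exists B.
have := rank_leq_row B; rewrite leq_eqVlt => /predU1P [|ltm]; first by left.
have := rank_leq_col B; rewrite leq_eqVlt => /predU1P [|ltn]; first by right.
by have [H [H134 /(_ (sub2 H H134))]] := ginv134_not_penrose2 MP_Bd ltm ltn.
Qed.

Lemma ginv12_penrose3P :
  (forall H, ginv [:: 1; 2]%N B H -> penrose 3 B H) <-> B = 0 \/ \rank B = m.
Proof.
split=> [sub3 | full H /ginv12E [BH1 _]]; last exact: penrose3_full_rows.
have [Bd MP_Bd] := is_MP_exists B.
have [->|B_neq0] := eqVneq B 0; first by left.
have := rank_leq_row B; rewrite leq_eqVlt => /predU1P [|ltm]; first by right.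
by have [H [H12 /(_ (sub3 H H12))]] := ginv12_not_penrose3 MP_Bd B_neq0 ltm.
Qed.

End Characterizations.

Lemma ginv12_penrose4P (R : numClosedFieldType) m n (B : 'M[R]_(m, n)) :
  (forall H, ginv [:: 1; 2]%N B H -> penrose 4 B H) <-> B = 0 \/ \rank B = n.
Proof.
have B0E : ctmx B = 0 <-> B = 0.
  by split=> [B0 | ->]; [apply: ctmx_inj; rewrite B0 | ]; rewrite ctmx0.
rewrite -mxrank_ctmx -B0E -ginv12_penrose3P.
split=> sub H; rewrite -[H]ctmxK.
  by move=> /ginv12_ctmx H12; apply/penrose3_ctmx/sub.
by rewrite -ginv12_ctmx => /sub /penrose3_ctmx.
Qed.

Lemma meq_msub (T : Type) (P S : T -> Prop) : meq P S <-> msub P S /\ msub S P.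
Proof. by split=> [PS | [PS SP] x]; [split=> x /PS | split=> [/PS | /SP]]. Qed.

Section InclusionsForB.
Variables (R : numClosedFieldType) (m n : nat) (B : 'M[R]_(m, n)).

Local Notation Q t := (ginv t%N B).

Lemma ginv12_meet_ginv t : all [in [:: 1; 2; 3; 4]%N] t -> mmeet (Q [:: 1; 2]) (Q t).
Proof.
have [Bd MP_Bd] := is_MP_exists B.
by move=> t1234; exists Bd; split; apply: ginv_subset MP_Bd.
Qed.

Lemma ginv_sub_ginv12 t : 1%N \in t -> all [in [:: 1; 3; 4]%N] t ->
  msub (Q t) (Q [:: 1; 2]) <-> \rank B = m \/ \rank B = n.
Proof.
move=> t1 t134; split=> [sub | full H Ht].
  by apply/ginv134_penrose2P => H /(ginv_subset t134) /sub /ginv12E [].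
have BH1 : penrose 1 B H := @Ht 1%N t1.
by apply/ginv12E; split; last exact: penrose2_full_rank.
Qed.

Lemma ginv12_sub_ginvE i t : all [in t] [:: 1; i]%N -> all [in [:: 1; 2; i]%N] t ->
  msub (Q [:: 1; 2]) (Q t) <-> (forall H, Q [:: 1; 2] H -> penrose i B H).
Proof.
move=> t1i t12i; split=> sub H H12.
  by apply: (ginv_subset t1i (sub H H12)); rewrite !inE eqxx orbT.
apply: (ginv_subset t12i) => j; rewrite !inE.
by case/or3P=> /eqP ->; [apply: H12 | apply: H12 | apply: sub].
Qed.

Lemma ginv12_sub_ginv134 :
  msub (Q [:: 1; 2]) (Q [:: 1; 3; 4]) <-> B = 0 \/ \rank B = m /\ m = n.
Proof.
have -> : msub (Q [:: 1; 2]) (Q [:: 1; 3; 4]) <->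
          (forall H, Q [:: 1; 2] H -> penrose 3 B H) /\
          (forall H, Q [:: 1; 2] H -> penrose 4 B H).
  split=> [sub | [sub3 sub4] H H12]; first by split=> H /sub; apply.
  move=> j; rewrite !inE.
  by case/or3P=> /eqP ->; [apply: H12 | apply: sub3 | apply: sub4].
rewrite ginv12_penrose3P ginv12_penrose4P.
split=> [[[B0 | rBm] [B0' | rBn]] | [B0 | [rBm mn]]]; try by left.
- by right; split; last exact: etrans (esym rBm) rBn.
- by split; left.
- by split; right; last exact: etrans rBm mn.
Qed.

Hypotheses (m_gt0 : (0 < m)%N) (n_gt0 : (0 < n)%N).

Lemma zero_not_full_rank : B = 0 -> ~ (\rank B = m \/ \rank B = n).
Proof.
by move=> ->; rewrite mxrank0 => -[] rk0; [move: m_gt0 | move: n_gt0]; rewrite -rk0.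
Qed.

Lemma ginv12_vs_ginv1 :
  msub (Q [:: 1; 2]) (Q [:: 1]) /\
  (msub (Q [:: 1]) (Q [:: 1; 2]) <-> meq (Q [:: 1; 2]) (Q [:: 1])) /\
  (meq (Q [:: 1; 2]) (Q [:: 1]) <-> \rank B = m \/ \rank B = n).
Proof.
have sub : msub (Q [:: 1; 2]) (Q [:: 1]) by move=> H; apply: ginv_subset.
by rewrite meq_msub -(@ginv_sub_ginv12 [:: 1]%N) //; tauto.
Qed.

Lemma ginv12_vs_ginv13 :
  mmeet (Q [:: 1; 2]) (Q [:: 1; 3]) /\
  (msub (Q [:: 1; 3]) (Q [:: 1; 2]) <-> \rank B = m \/ \rank B = n) /\
  (msub (Q [:: 1; 2]) (Q [:: 1; 3]) <-> B = 0 \/ \rank B = m) /\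
  (meq (Q [:: 1; 2]) (Q [:: 1; 3]) <-> \rank B = m).
Proof.
have := zero_not_full_rank; split; first exact: ginv12_meet_ginv.
rewrite meq_msub ginv_sub_ginv12 // (ginv12_sub_ginvE (i := 3)) //.
by rewrite ginv12_penrose3P; tauto.
Qed.

Lemma ginv12_vs_ginv14 :
  mmeet (Q [:: 1; 2]) (Q [:: 1; 4]) /\
  (msub (Q [:: 1; 4]) (Q [:: 1; 2]) <-> \rank B = m \/ \rank B = n) /\
  (msub (Q [:: 1; 2]) (Q [:: 1; 4]) <-> B = 0 \/ \rank B = n) /\
  (meq (Q [:: 1; 2]) (Q [:: 1; 4]) <-> \rank B = n).
Proof.
have := zero_not_full_rank; split; first exact: ginv12_meet_ginv.
rewrite meq_msub ginv_sub_ginv12 // (ginv12_sub_ginvE (i := 4)) //.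
by rewrite ginv12_penrose4P; tauto.
Qed.

Lemma ginv12_vs_ginv123 :
  msub (Q [:: 1; 2; 3]) (Q [:: 1; 2]) /\
  (msub (Q [:: 1; 2]) (Q [:: 1; 2; 3]) <-> meq (Q [:: 1; 2]) (Q [:: 1; 2; 3])) /\
  (meq (Q [:: 1; 2]) (Q [:: 1; 2; 3]) <-> B = 0 \/ \rank B = m).
Proof.
have sup : msub (Q [:: 1; 2; 3]) (Q [:: 1; 2]) by move=> H; apply: ginv_subset.
by rewrite meq_msub (ginv12_sub_ginvE (i := 3)) // ginv12_penrose3P; tauto.
Qed.

Lemma ginv12_vs_ginv124 :
  msub (Q [:: 1; 2; 4]) (Q [:: 1; 2]) /\
  (msub (Q [:: 1; 2]) (Q [:: 1; 2; 4]) <-> meq (Q [:: 1; 2]) (Q [:: 1; 2; 4])) /\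
  (meq (Q [:: 1; 2]) (Q [:: 1; 2; 4]) <-> B = 0 \/ \rank B = n).
Proof.
have sup : msub (Q [:: 1; 2; 4]) (Q [:: 1; 2]) by move=> H; apply: ginv_subset.
by rewrite meq_msub (ginv12_sub_ginvE (i := 4)) // ginv12_penrose4P; tauto.
Qed.

Lemma ginv12_vs_ginv134 :
  mmeet (Q [:: 1; 2]) (Q [:: 1; 3; 4]) /\
  (msub (Q [:: 1; 3; 4]) (Q [:: 1; 2]) <-> \rank B = m \/ \rank B = n) /\
  (msub (Q [:: 1; 2]) (Q [:: 1; 3; 4]) <-> B = 0 \/ \rank B = m /\ m = n) /\
  (meq (Q [:: 1; 2]) (Q [:: 1; 3; 4]) <-> \rank B = m /\ m = n).
Proof.
have := zero_not_full_rank; split; first exact: ginv12_meet_ginv.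
by rewrite meq_msub ginv_sub_ginv12 // ginv12_sub_ginv134; tauto.
Qed.

End InclusionsForB.

Section Transport.
Variables (T U : Type) (f : T -> U) (g : U -> T).
Hypothesis fK : cancel g f.
Implicit Types P S : U -> Prop.

Lemma msub_comp P S : msub (P \o f) (S \o f) <-> msub P S.
Proof. by split=> PS x; [rewrite -(fK x); apply: PS | apply: PS]. Qed.

Lemma meq_comp P S : meq (P \o f) (S \o f) <-> meq P S.
Proof. by rewrite !meq_msub !msub_comp. Qed.

Lemma mmeet_comp P S : mmeet (P \o f) (S \o f) <-> mmeet P S.
Proof. by split=> [[x] | [y]]; [exists (f x) | exists (g y); rewrite /= fK]. Qed.

End Transport.

Definition sandwich (R : comUnitRingType) p q (U : 'M[R]_q) (V : 'M[R]_p)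
  (G : 'M[R]_(q, p)) : 'M[R]_(q, p) := U *m G *m V.

Lemma sandwichK (R : comUnitRingType) p q (U : 'M[R]_q) (V : 'M[R]_p) :
  U \in unitmx -> V \in unitmx -> cancel (sandwich U V) (sandwich (invmx U) (invmx V)).
Proof. by move=> uU uV G; rewrite /sandwich !mulmxA mulVmx // mul1mx mulmxK. Qed.

Section SandwichByUnits.
Variables (R : numClosedFieldType) (m n : nat).
Variables (A : 'M[R]_m) (B : 'M[R]_(m, n)) (C : 'M[R]_n).
Hypotheses (unitA : A \in unitmx) (unitC : C \in unitmx).

Lemma sandwichVK : cancel (sandwich (invmx C) (invmx A)) (sandwich C A).
Proof. by move=> G; rewrite /sandwich !mulmxA mulmxV // mul1mx mulmxKV ?unitmx_inv. Qed.

Lemma ginv12_mul_unitmx :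
  ginv [:: 1; 2]%N (A *m B *m C) = ginv [:: 1; 2]%N B \o sandwich C A.
Proof.
apply: functional_extensionality => G; apply: propositional_extensionality.
have injAC := can_inj (sandwichK unitA unitC).
have injCA := can_inj (sandwichK unitC unitA).
have E1 : A *m B *m C *m G *m (A *m B *m C) =
          sandwich A C (B *m sandwich C A G *m B) by rewrite /sandwich !mulmxA.
have E2 : sandwich C A G *m B *m sandwich C A G =
          sandwich C A (G *m (A *m B *m C) *m G) by rewrite /sandwich !mulmxA.
rewrite /= !ginv12E /= E1 E2 -[A *m B *m C in RHS]/(sandwich A C B).
by split=> [[/injAC -> ->] | [-> /injCA ->]].
Qed.

Lemma rev_setE t : rev_set t A B C = ginv t B \o sandwich C A.
Proof.
apply: functional_extensionality => G; apply: propositional_extensionality.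
split=> [[G0 [BG0 ->]] | BG]; first by rewrite /= sandwichVK.
by exists (sandwich C A G); split; last exact: esym (sandwichK unitC unitA G).
Qed.

End SandwichByUnits.

Theorem theorem4p2 (R : numClosedFieldType) (m n : nat)
  (A : 'M[R]_m) (B : 'M[R]_(m, n)) (C : 'M[R]_n)
  (hm : (0 < m)%N) (hn : (0 < n)%N)
  (hA : A \in unitmx) (hC : C \in unitmx) :
  let M := A *m B *m C in
  let M12 := ginv [:: 1; 2]%N M in
  let S := fun t => rev_set t A B C in
  let rB := \rank B in
  (* (9) *)
  (msub M12 (S [:: 1]%N) /\
   (msub (S [:: 1]%N) M12 <-> meq M12 (S [:: 1]%N)) /\
   (meq M12 (S [:: 1]%N) <-> (rB = m \/ rB = n))) /\
  (* (10) *)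
  meq M12 (S [:: 1; 2]%N) /\
  (* (11) *)
  (mmeet M12 (S [:: 1; 3]%N) /\
   (msub (S [:: 1; 3]%N) M12 <-> (rB = m \/ rB = n)) /\
   (msub M12 (S [:: 1; 3]%N) <-> (B = 0 \/ rB = m)) /\
   (meq M12 (S [:: 1; 3]%N) <-> rB = m)) /\
  (* (12) *)
  (mmeet M12 (S [:: 1; 4]%N) /\
   (msub (S [:: 1; 4]%N) M12 <-> (rB = m \/ rB = n)) /\
   (msub M12 (S [:: 1; 4]%N) <-> (B = 0 \/ rB = n)) /\
   (meq M12 (S [:: 1; 4]%N) <-> rB = n)) /\
  (* (13) *)
  (msub (S [:: 1; 2; 3]%N) M12 /\
   (msub M12 (S [:: 1; 2; 3]%N) <-> meq M12 (S [:: 1; 2; 3]%N)) /\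
   (meq M12 (S [:: 1; 2; 3]%N) <-> (B = 0 \/ rB = m))) /\
  (* (14) *)
  (msub (S [:: 1; 2; 4]%N) M12 /\
   (msub M12 (S [:: 1; 2; 4]%N) <-> meq M12 (S [:: 1; 2; 4]%N)) /\
   (meq M12 (S [:: 1; 2; 4]%N) <-> (B = 0 \/ rB = n))) /\
  (* (15) *)
  (mmeet M12 (S [:: 1; 3; 4]%N) /\
   (msub (S [:: 1; 3; 4]%N) M12 <-> (rB = m \/ rB = n)) /\
   (msub M12 (S [:: 1; 3; 4]%N) <-> (B = 0 \/ (rB = m /\ m = n))) /\
   (meq M12 (S [:: 1; 3; 4]%N) <-> (rB = m /\ m = n))) /\
  (* (16) *)
  ((exists Bd, is_MP B Bd) /\
   forall Bd, is_MP B Bd -> M12 (invmx C *m Bd *m invmx A)).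
Proof.
cbv zeta; have BK := sandwichVK hA hC.
rewrite ginv12_mul_unitmx // !rev_setE //.
rewrite !(msub_comp BK) !(meq_comp BK) !(mmeet_comp BK).
split; first exact: ginv12_vs_ginv1.
split; first by [].
split; first by apply: ginv12_vs_ginv13.
split; first by apply: ginv12_vs_ginv14.
split; first exact: ginv12_vs_ginv123.
split; first exact: ginv12_vs_ginv124.
split; first by apply: ginv12_vs_ginv134.
split; first exact: is_MP_exists.
move=> Bd MP_Bd; rewrite /= BK.
exact: ginv_subset MP_Bd.
Qed.
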